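(* Fix $N\ge1$, $L>0$, $\alpha>0$, $\lambda_e>0$, $\epsilon\in(0,1)$, and let $$K_5=\frac{2N}{\alpha}\left[\left(\frac{L}{N}\right)^\alpha+1\right]W_0\!\left(\frac{\alpha}{2}\left[\frac{\ln\frac{1}{1-\epsilon}}{NK_1}\right]^{-\alpha/2}\right),\qquad K_1=\pi\lambda_e\Gamma\!\left(\tfrac{2}{\alpha}+1\right).$$ Consider, as functions of $p>0$, the optimal non-on-off-transmission rates $R_t^*(p)=R_e^*(p)+\frac{1}{\ln2}W_0\!\big(2^{-R_e^*(p)}/K_4(p)\big)$ and $R_s^*(p)=\frac{1}{\ln2}W_0\!\big(2^{-R_e^*(p)}/K_4(p)\big)$, where $K_4(p)=\frac{N[(L/N)^\alpha+1]}{p}$ and $R_e^*(p)=\log_2\!\left[\frac{2p}{\alpha}W_0\!\left(\frac{\alpha}{2}\left[\frac{\ln\frac{1}{1-\epsilon}}{NK_1}\right]^{-\alpha/2}\right)+1\right]$, and the corresponding optimal throughput $\mathbb{U}^*(p)=\frac{R_s^*(p)}{N}\exp\!\left[-K_4(p)\left(2^{R_t^*(p)}-1\right)\right]$. Then as $p\to\infty$: $R_t^*(p)\to\infty$, $$R_s^*(p)\to\frac{1}{\ln 2}W_0\!\left(\frac{1}{K_5}\right),\qquad \mathbb{U}^*(p)\to\frac{1}{N\ln2}W_0\!\left(\frac{1}{K_5}\right)\exp\!\left[-K_5\exp\!\left(W_0\!\left(\frac{1}{K_5}\right)\right)\right].$$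
   Context: These are the optimal wiretap-code rates and resulting secure transmission throughput $\mathbb{U}=\mathcal{P}_cR_s/N$ (with end-to-end connection probability $\mathcal{P}_c=\exp[-N(2^{R_t}-1)((L/N)^\alpha+1)/p]$) of the non-on-off transmission scheme in an $N$-hop linear network of length $L$ with equal hops, subject to end-to-end secrecy outage probability $\epsilon$ against Poisson eavesdroppers of density $\lambda_e$; $p$ is the transmitter-side SNR, $\alpha$ the path-loss exponent. $W_0$ is the principal branch of the Lambert W function. *)

From Stdlib Require Import Reals Lra ClassicalEpsilon.
Open Scope R_scope.

Definition W0 (x : R) : R :=
  epsilon (inhabits 0) (fun w => -1 <= w /\ w * exp w = x).

(* Gamma function via Euler's integral, as an improper Riemann integral
   Gamma s = lim_{T -> +oo} int_0^T t^(s-1) e^(-t) dt  (used for s > 1). *)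
Definition Gamma_integrand (s t : R) : R := Rpower t (s - 1) * exp (- t).

Definition Gamma_fun (s : R) : R :=
  epsilon (inhabits 0) (fun g =>
    forall eps, 0 < eps -> exists T0, forall T, T0 <= T ->
      exists pr : Riemann_integrable (Gamma_integrand s) 0 T,
        Rabs (RiemannInt pr - g) < eps).

Definition log2 (x : R) : R := ln x / ln 2.

Definition K1 (alpha lam_e : R) : R := PI * lam_e * Gamma_fun (2 / alpha + 1).

Definition Wterm (N : nat) (alpha lam_e eps : R) : R :=
  W0 (alpha / 2 * Rpower (ln (1 / (1 - eps)) / (INR N * K1 alpha lam_e)) (- alpha / 2)).

Definition K4 (N : nat) (L alpha p : R) : R :=
  INR N * (Rpower (L / INR N) alpha + 1) / p.

Definition K5 (N : nat) (L alpha lam_e eps : R) : R :=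
  2 * INR N / alpha * (Rpower (L / INR N) alpha + 1) * Wterm N alpha lam_e eps.

Definition Re_opt (N : nat) (alpha lam_e eps p : R) : R :=
  log2 (2 * p / alpha * Wterm N alpha lam_e eps + 1).

Definition Rs_opt (N : nat) (L alpha lam_e eps p : R) : R :=
  / ln 2 * W0 (Rpower 2 (- Re_opt N alpha lam_e eps p) / K4 N L alpha p).

Definition Rt_opt (N : nat) (L alpha lam_e eps p : R) : R :=
  Re_opt N alpha lam_e eps p + Rs_opt N L alpha lam_e eps p.

Definition U_opt (N : nat) (L alpha lam_e eps p : R) : R :=
  Rs_opt N L alpha lam_e eps p / INR N *
  exp (- K4 N L alpha p * (Rpower 2 (Rt_opt N L alpha lam_e eps p) - 1)).

From Stdlib Require Import Reals Lra ClassicalEpsilon.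
From Coquelicot Require Import Coquelicot.
Open Scope R_scope.

(* With k := K4 p = N((L/N)^alpha + 1)/p, which tends to 0 as p -> oo, the
   optimal rates are closed-form expressions in k:
     2^Re = (k + K5)/k,   Rs = W0(1/(k + K5)) / ln 2,
     K4 (2^Rt - 1) = (k + K5) exp(W0(1/(k + K5))) - k.
   Since W0 is continuous on (0, oo), the limits of Rs and U are these
   expressions at k = 0, while Rt >= Re = log2(1 + K5/k) -> oo. *)

Lemma xexp_lt a b : 0 <= a -> a < b -> a * exp a < b * exp b.
Proof.
  intros Ha Hab.
  pose proof (exp_increasing a b Hab). pose proof (exp_pos a). nra.
Qed.

Lemma xexp_le a b : 0 <= a -> a <= b -> a * exp a <= b * exp b.
Proof.
  intros Ha [Hab | <-]; [left; exact (xexp_lt a b Ha Hab) | right; reflexivity].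
Qed.

Lemma W0_pos_spec y : 0 < y -> 0 < W0 y /\ W0 y * exp (W0 y) = y.
Proof.
  intros Hy.
  assert (Hsol : exists w, -1 <= w /\ w * exp w = y).
  { destruct (IVT_cor (fun w => w * exp w - y) 0 y) as [z [Hz Hfz]].
    - reg.
    - lra.
    - pose proof (exp_ineq1 y ltac:(lra)). rewrite exp_0. nra.
    - exists z. split; lra. }
  unfold W0. destruct (epsilon_spec (inhabits 0) _ Hsol) as [_ Hw].
  set (w := epsilon _ _) in *.
  split; [| exact Hw].
  destruct (Rle_or_lt w 0) as [Hle | Hlt]; [| exact Hlt].
  pose proof (exp_pos w). nra.
Qed.

Lemma W0_bounds y a b :
  0 <= a -> a <= b -> a * exp a < y -> y < b * exp b -> a < W0 y < b.
Proof.
  intros Ha Hab Hay Hyb.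
  assert (Hy : 0 < y)
    by (assert (0 <= a * exp a) by (apply Rmult_le_pos; [lra | left; apply exp_pos]); lra).
  destruct (W0_pos_spec y Hy) as [Hw Hwy].
  split.
  - destruct (Rlt_or_le a (W0 y)) as [Hlt | Hle]; [exact Hlt |].
    pose proof (xexp_le _ _ (Rlt_le _ _ Hw) Hle). lra.
  - destruct (Rlt_or_le (W0 y) b) as [Hlt | Hle]; [exact Hlt |].
    pose proof (xexp_le _ _ (Rle_trans _ _ _ Ha Hab) Hle). lra.
Qed.

(* W0 is the inverse of the increasing map w |-> w exp w on [0, oo): the
   preimage of a neighbourhood (w - d, w + d) of W0 y contains a neighbourhood
   of y. *)
Lemma continuity_pt_W0 y : 0 < y -> continuity_pt W0 y.
Proof.
  intros Hy eps Heps. destruct (W0_pos_spec y Hy) as [Hw Hwy].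
  set (w := W0 y) in *.
  set (d := Rmin (eps / 2) (w / 2)).
  assert (Hd : 0 < d) by (apply Rmin_pos; lra).
  assert (Hd_eps : d <= eps / 2) by apply Rmin_l.
  assert (Hd_w : d <= w / 2) by apply Rmin_r.
  pose proof (xexp_lt (w - d) w ltac:(lra) ltac:(lra)) as Hlow.
  pose proof (xexp_lt w (w + d) ltac:(lra) ltac:(lra)) as Hhigh.
  assert (Hlow0 : 0 <= (w - d) * exp (w - d))
    by (apply Rmult_le_pos; [lra | left; apply exp_pos]).
  set (r := Rmin (y - (w - d) * exp (w - d)) ((w + d) * exp (w + d) - y)).
  exists r. split; [apply Rmin_pos; lra |].
  intros x [_ Hx]. simpl in *. unfold R_dist in *.
  assert (Hr_low : r <= y - (w - d) * exp (w - d)) by apply Rmin_l.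
  assert (Hr_high : r <= (w + d) * exp (w + d) - y) by apply Rmin_r.
  apply Rabs_def2 in Hx as [Hx1 Hx2].
  destruct (W0_bounds x (w - d) (w + d)) as [Hwx1 Hwx2]; try lra.
  apply Rabs_def1; lra.
Qed.

Lemma continuous_Rplus (f g : R -> R) x :
  continuous f x -> continuous g x -> continuous (fun y => f y + g y) x.
Proof. exact (continuous_plus f g x). Qed.

Lemma continuous_Rminus (f g : R -> R) x :
  continuous f x -> continuous g x -> continuous (fun y => f y - g y) x.
Proof. exact (continuous_minus f g x). Qed.

Lemma continuous_Rmult (f g : R -> R) x :
  continuous f x -> continuous g x -> continuous (fun y => f y * g y) x.
Proof. exact (continuous_mult f g x). Qed.

Lemma continuous_Ropp (f : R -> R) x : continuous f x -> continuous (fun y => - f y) x.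
Proof. exact (continuous_opp f x). Qed.

Lemma continuous_W0_inv_shift K : 0 < K -> continuous (fun k => W0 (/ (k + K))) 0.
Proof.
  intros HK.
  apply (continuous_comp (fun k => / (k + K)) W0).
  - apply continuous_Rinv_comp; [| lra].
    apply continuous_Rplus; [apply continuous_id | apply continuous_const].
  - apply continuity_pt_filterlim, continuity_pt_W0.
    apply Rinv_0_lt_compat. lra.
Qed.

Lemma is_lim_p_infty_Rabs f (l : R) : is_lim f p_infty l ->
  forall e, 0 < e -> exists P, forall p, P < p -> Rabs (f p - l) < e.
Proof.
  intros Hf e He. apply is_lim_spec in Hf.
  destruct (Hf (mkposreal e He)) as [P HP]. exists P. exact HP.
Qed.

Lemma Rpower2_log2 x : 0 < x -> Rpower 2 (log2 x) = x.
Proof.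
  intros Hx. pose proof ln_lt_2.
  unfold Rpower, log2. replace (ln x / ln 2 * ln 2) with (ln x) by (field; lra).
  apply exp_ln, Hx.
Qed.

Lemma Rpower2_scaled x : Rpower 2 (/ ln 2 * x) = exp x.
Proof.
  pose proof ln_lt_2. unfold Rpower. f_equal. field. lra.
Qed.

Lemma log2_gt x M : Rpower 2 M < x -> M < log2 x.
Proof.
  intros HM. pose proof ln_lt_2.
  assert (Hx : 0 < x) by (pose proof (exp_pos (M * ln 2)); unfold Rpower in HM; lra).
  unfold log2. apply (Rmult_lt_reg_r (ln 2)); [lra |].
  replace (ln x / ln 2 * ln 2) with (ln x) by (field; lra).
  rewrite <- (ln_exp (M * ln 2)). apply ln_increasing; [apply exp_pos | exact HM].
Qed.

Section OptimalRates.

Variables (N : nat) (L alpha lam_e eps : R).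
Hypotheses (HN : (1 <= N)%nat) (Ha : 0 < alpha).

Local Notation K4p := (K4 N L alpha).
Local Notation K5c := (K5 N L alpha lam_e eps).

Lemma INR_N_pos : 0 < INR N.
Proof. apply lt_0_INR, HN. Qed.

Lemma Wterm_pos : 0 < Wterm N alpha lam_e eps.
Proof.
  apply W0_pos_spec. apply Rmult_lt_0_compat; [lra | apply exp_pos].
Qed.

Lemma hop_loss_pos : 0 < Rpower (L / INR N) alpha + 1.
Proof. pose proof (exp_pos (alpha * ln (L / INR N))). unfold Rpower. lra. Qed.

Lemma path_loss_pos : 0 < INR N * (Rpower (L / INR N) alpha + 1).
Proof. apply Rmult_lt_0_compat; [exact INR_N_pos | exact hop_loss_pos]. Qed.

Lemma K4_pos p : 0 < p -> 0 < K4p p.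
Proof.
  intros Hp. apply Rdiv_lt_0_compat; [exact path_loss_pos | exact Hp].
Qed.

Lemma K5_pos : 0 < K5c.
Proof.
  pose proof path_loss_pos. pose proof Wterm_pos.
  unfold K5. replace (2 * INR N / alpha * (Rpower (L / INR N) alpha + 1)
    * Wterm N alpha lam_e eps)
  with (INR N * (Rpower (L / INR N) alpha + 1)
    * (2 * Wterm N alpha lam_e eps / alpha)) by (field; lra).
  apply Rmult_lt_0_compat; [lra | apply Rdiv_lt_0_compat; lra].
Qed.

Lemma is_lim_K4 : is_lim K4p p_infty 0.
Proof.
  replace (Finite 0) with (Rbar_mult (INR N * (Rpower (L / INR N) alpha + 1)) 0)
    by (simpl; f_equal; ring).
  apply (is_lim_scal_l (fun p => / p)).
  apply (is_lim_inv (fun p => p) p_infty p_infty); [apply is_lim_id | discriminate].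
Qed.

Lemma Re_opt_K p : 0 < p -> Re_opt N alpha lam_e eps p = log2 ((K4p p + K5c) / K4p p).
Proof.
  intros Hp. pose proof INR_N_pos. pose proof hop_loss_pos.
  unfold Re_opt. f_equal. unfold K4, K5. field. repeat split; lra.
Qed.

Lemma Rs_opt_K p : 0 < p ->
  Rs_opt N L alpha lam_e eps p = / ln 2 * W0 (/ (K4p p + K5c)).
Proof.
  intros Hp. pose proof (K4_pos p Hp). pose proof K5_pos.
  unfold Rs_opt. rewrite Rpower_Ropp, Re_opt_K, Rpower2_log2 by
    (try apply Rdiv_lt_0_compat; lra).
  do 2 f_equal. field. split; lra.
Qed.

Lemma Rs_opt_pos p : 0 < p -> 0 < Rs_opt N L alpha lam_e eps p.
Proof.
  intros Hp. pose proof (K4_pos p Hp). pose proof K5_pos. pose proof ln_lt_2.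
  rewrite Rs_opt_K by exact Hp.
  apply Rmult_lt_0_compat; [apply Rinv_0_lt_compat; lra |].
  apply W0_pos_spec, Rinv_0_lt_compat. lra.
Qed.

Lemma K4_Rt_opt p : 0 < p ->
  K4p p * (Rpower 2 (Rt_opt N L alpha lam_e eps p) - 1)
  = (K4p p + K5c) * exp (W0 (/ (K4p p + K5c))) - K4p p.
Proof.
  intros Hp. pose proof (K4_pos p Hp). pose proof K5_pos.
  unfold Rt_opt. rewrite Rpower_plus, Rs_opt_K, Re_opt_K, Rpower2_log2, Rpower2_scaled
    by (try apply Rdiv_lt_0_compat; lra).
  field. lra.
Qed.

Lemma Re_opt_unbounded M : exists P, 0 < P /\
  forall p, P < p -> M < Re_opt N alpha lam_e eps p.
Proof.
  pose proof Wterm_pos as HW.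
  set (W := Wterm N alpha lam_e eps) in *.
  assert (Hslope : 0 < 2 * W / alpha) by (apply Rdiv_lt_0_compat; lra).
  exists (Rpower 2 M / (2 * W / alpha)).
  split; [apply Rdiv_lt_0_compat; [apply exp_pos | exact Hslope] |].
  intros p Hp. unfold Re_opt. fold W. apply log2_gt.
  apply (Rmult_lt_compat_r (2 * W / alpha)) in Hp; [| exact Hslope].
  replace (Rpower 2 M / (2 * W / alpha) * (2 * W / alpha)) with (Rpower 2 M) in Hp
    by (field; lra).
  replace (2 * p / alpha * W) with (p * (2 * W / alpha)) by (field; lra).
  lra.
Qed.

Lemma Rt_opt_unbounded M : exists P, forall p, P < p -> M < Rt_opt N L alpha lam_e eps p.
Proof.
  destruct (Re_opt_unbounded M) as [P [HP HRe]]. exists P. intros p Hp.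
  pose proof (Rs_opt_pos p ltac:(lra)). specialize (HRe p Hp).
  unfold Rt_opt. lra.
Qed.

Lemma is_lim_Rs_opt :
  is_lim (Rs_opt N L alpha lam_e eps) p_infty (/ ln 2 * W0 (/ K5c)).
Proof.
  set (Rs := fun k => / ln 2 * W0 (/ (k + K5c))).
  replace (/ ln 2 * W0 (/ K5c)) with (Rs 0) by (unfold Rs; rewrite Rplus_0_l; reflexivity).
  apply (is_lim_ext_loc (fun p => Rs (K4p p))).
  { exists 0. intros p Hp. symmetry. apply Rs_opt_K, Hp. }
  apply (is_lim_comp_continuous K4p Rs); [exact is_lim_K4 |].
  apply continuous_Rmult; [apply continuous_const |].
  apply continuous_W0_inv_shift, K5_pos.
Qed.

Lemma is_lim_U_opt : is_lim (U_opt N L alpha lam_e eps) p_infty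
  (/ (INR N * ln 2) * W0 (/ K5c) * exp (- K5c * exp (W0 (/ K5c)))).
Proof.
  pose proof K5_pos. pose proof INR_N_pos. pose proof ln_lt_2.
  set (U := fun k => / ln 2 * W0 (/ (k + K5c)) / INR N
    * exp (- ((k + K5c) * exp (W0 (/ (k + K5c))) - k))).
  replace (/ (INR N * ln 2) * W0 (/ K5c) * exp (- K5c * exp (W0 (/ K5c))))
    with (U 0) by (unfold U; rewrite Rplus_0_l, Rminus_0_r, Ropp_mult_distr_l;
                   field; split; lra).
  apply (is_lim_ext_loc (fun p => U (K4p p))).
  { exists 0. intros p Hp. unfold U, U_opt.
    rewrite <- Rs_opt_K, <- K4_Rt_opt by exact Hp. f_equal. f_equal. ring. }
  apply (is_lim_comp_continuous K4p U); [exact is_lim_K4 |].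
  pose proof (continuous_W0_inv_shift K5c K5_pos) as HW.
  apply continuous_Rmult.
  - apply continuous_Rmult; [| apply continuous_const].
    apply continuous_Rmult; [apply continuous_const | exact HW].
  - apply continuous_exp_comp, continuous_Ropp, continuous_Rminus;
      [| apply continuous_id].
    apply continuous_Rmult; [| apply continuous_exp_comp, HW].
    apply continuous_Rplus; [apply continuous_id | apply continuous_const].
Qed.

End OptimalRates.

Theorem corollary4 (N : nat) (L alpha lam_e eps : R)
  (HN : (1 <= N)%nat) (HL : 0 < L) (Ha : 0 < alpha) (Hl : 0 < lam_e)
  (He0 : 0 < eps) (He1 : eps < 1) :
  (forall M : R, exists P : R, forall p, P < p -> M < Rt_opt N L alpha lam_e eps p)
  /\
  (forall e : R, 0 < e -> exists P : R, forall p, P < p ->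
     Rabs (Rs_opt N L alpha lam_e eps p
           - / ln 2 * W0 (/ K5 N L alpha lam_e eps)) < e)
  /\
  (forall e : R, 0 < e -> exists P : R, forall p, P < p ->
     Rabs (U_opt N L alpha lam_e eps p
           - / (INR N * ln 2) * W0 (/ K5 N L alpha lam_e eps)
             * exp (- K5 N L alpha lam_e eps * exp (W0 (/ K5 N L alpha lam_e eps)))) < e).
Proof.
  (* [Rpower x y] is positive for every [x]. *)
  split; [| split].
  - exact (Rt_opt_unbounded N L alpha lam_e eps HN Ha).
  - exact (is_lim_p_infty_Rabs _ _ (is_lim_Rs_opt N L alpha lam_e eps HN Ha)).
  - exact (is_lim_p_infty_Rabs _ _ (is_lim_U_opt N L alpha lam_e eps HN Ha)).
Qed.
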